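(* Let $\alpha_{\mathrm{model}}$ be the hybrid program defined in the context. Then the following two differential dynamic logic formulas are valid, i.e. true in every state (every assignment of real values to all variables and constants): $$\mathrm{Ctx}\ \wedge\ x_e + L \le x_o\ \wedge\ D_e(B_{\min}) + L < D_o\ \wedge\ t_c = t - T\ \ \rightarrow\ \ [\alpha_{\mathrm{model}}]\,\big(x_e + L \le x_o\big),$$ $$\mathrm{Ctx}\ \wedge\ x_o + L \le x_e\ \wedge\ \hat D_o + L < \hat D_e(A_{\min})\ \wedge\ t_c = t - T\ \ \rightarrow\ \ [\alpha_{\mathrm{model}}]\,\big(x_o + L \le x_e\big).$$ That is, from every state satisfying the respective premise, every final state of every run of $\alpha_{\mathrm{model}}$ satisfies the respective distance condition.
   Context: Hybrid programs and their semantics (differential dynamic logic). A state assigns a real number to every variable. Programs denote transition relations on states: $?\varphi$ stays in the current state if $\varphi$ holds there and has no transition otherwise; $x := e$ sets $x$ to the value of term $e$; $x := *$ sets $x$ to an arbitrary real; $\{x_1'=e_1,\dots,x_n'=e_n \,\&\, \psi\}$ follows the solution of the ODE system for any duration $r\ge 0$ (including $0$) such that $\psi$ holds throughout $[0,r]$, other variables unchanged; $\alpha\cup\beta$ is nondeterministic choice; $\alpha;\beta$ is sequential composition; $\alpha^*$ repeats $\alpha$ any finite number $\ge 0$ of times. $\mathtt{if}(\varphi)\,\alpha$ abbreviates $(?\varphi;\alpha)\cup ?\neg\varphi$, and $\mathtt{if}(\varphi)\,\alpha\ \mathtt{else}\ \beta$ abbreviates $(?\varphi;\alpha)\cup(?\neg\varphi;\beta)$.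 $[\alpha]\phi$ holds in state $\omega$ iff $\phi$ holds in every state reachable from $\omega$ by $\alpha$. Variables: ego car position $x_e$, velocity $v_e$, acceleration $a_e$; other car position $x_o$, velocity $v_o$, acceleration $a_o$; time $t$; clock $t_c$. Constants (not changed by programs): $T, L, V, A_{\min}, A_{\max}, B_{\min}, B_{\max}$. $\mathrm{Ctx} \equiv T>0 \wedge L>0 \wedge V>0 \wedge B_{\max}\le B_{\min}<0<A_{\min}\le A_{\max} \wedge B_{\max}\le a_e\le A_{\max}\wedge B_{\max}\le a_o\le A_{\max} \wedge 0\le v_e\le V \wedge 0\le v_o\le V$. Abbreviations: $D_e(a) = x_e - \frac{v_e^2}{2a}$, $D_o = x_o - \frac{v_o^2}{2B_{\max}}$; $\hat v_i = v_i - V$, $\hat x_i = x_i - V t$ for $i\in\{e,o\}$, $\hat D_e(a) = \hat x_e - \frac{\hat v_e^2}{2a}$, $\hat D_o = \hat x_o - \frac{\hat v_o^2}{2A_{\max}}$. $\mathrm{safeBack} \equiv x_e + L \le x_o \wedge \big( (a_e \le B_{\min} \wedge D_e(B_{\min}) + L < D_o) \vee (B_{\min}\le a_e \wedge v_e + a_e T < 0 \wedge D_e(a_e)+L<D_o) \vee (B_{\min}\le a_e \wedge v_e + a_e T\ge 0 \wedge D_e(B_{\min}) + (\tfrac{-a_e}{B_{\min}}+1)(\tfrac{a_e}{2}T^2 + T v_e) + L < D_o)\big)$. $\mathrm{safeFront} \equiv x_o + L \le x_e \wedge \big( (A_{\min}\le a_e \wedge \hat D_o + L < \hat D_e(A_{\min}))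 \vee (a_e \le A_{\min}\wedge \hat v_e + a_e T > 0 \wedge \hat D_o + L < \hat D_e(a_e)) \vee (a_e\le A_{\min} \wedge \hat v_e + a_e T \le 0 \wedge \hat D_o + L < \hat D_e(A_{\min}) + (\tfrac{-a_e}{A_{\min}}+1)(\tfrac{a_e}{2}T^2 + \hat v_e T))\big)$. Programs: $\mathrm{ctrl}_o \equiv a_o := *;\ ?(B_{\max}\le a_o\le A_{\max})$. $\mathrm{ctrl}_T \equiv a_e := *;\ ?(B_{\max}\le a_e\le A_{\max});\ t_c := t;\ \mathtt{if}(\neg(\mathrm{safeBack}\vee\mathrm{safeFront}))\ \{\mathtt{if}(x_e\le x_o)\ \{a_e:=*;\ ?(B_{\max}\le a_e\le B_{\min})\}\ \mathtt{else}\ \{a_e:=*;\ ?(A_{\min}\le a_e\le A_{\max})\}\}$. $\mathrm{accCor} \equiv \mathtt{if}((v_o=0\wedge a_o<0)\vee(v_o=V\wedge a_o>0))\ a_o:=0;\ \mathtt{if}((v_e=0\wedge a_e<0)\vee(v_e=V\wedge a_e>0))\ a_e:=0$. $\mathrm{plant} \equiv \{x_e'=v_e, v_e'=a_e, x_o'=v_o, v_o'=a_o, t'=1 \ \&\ t\le t_c+T \wedge 0\le v_e\le V\wedge 0\le v_o\le V\}$. $\alpha_{\mathrm{model}} \equiv \big(\mathrm{ctrl}_o;\ (\mathrm{ctrl}_T \cup ?(t<t_c+T));\ \mathrm{accCor};\ \mathrm{plant}\big)^*$. *)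

From Stdlib Require Import Reals.
Open Scope R_scope.

Record consts := mkConsts {
  T : R; L : R; V : R; Amin : R; Amax : R; Bmin : R; Bmax : R }.

Record st := mkSt {
  xe : R; ve : R; ae : R; xo : R; vo : R; ao : R; t : R; tc : R }.

Definition prog := st -> st -> Prop.

Definition test (P : st -> Prop) : prog := fun w v => P w /\ v = w.
Definition pseq (a b : prog) : prog := fun w v => exists u, a w u /\ b u v.
Definition pchoice (a b : prog) : prog := fun w v => a w v \/ b w v.
Inductive pstar (a : prog) : prog :=
  | pstar_refl w : pstar a w w
  | pstar_step w u v : a w u -> pstar a u v -> pstar a w v.
Definition pif (P : st -> Prop) (a : prog) : prog :=
  pchoice (pseq (test P) a) (test (fun w => ~ P w)).
Definition pifelse (P : st -> Prop) (a b : prog) : prog :=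
  pchoice (pseq (test P) a) (pseq (test (fun w => ~ P w)) b).

Definition box (a : prog) (phi : st -> Prop) (w : st) : Prop :=
  forall v, a w v -> phi v.

Definition set_ae (w : st) (r : R) : st :=
  mkSt (xe w) (ve w) r (xo w) (vo w) (ao w) (t w) (tc w).
Definition set_ao (w : st) (r : R) : st :=
  mkSt (xe w) (ve w) (ae w) (xo w) (vo w) r (t w) (tc w).
Definition set_tc (w : st) (r : R) : st :=
  mkSt (xe w) (ve w) (ae w) (xo w) (vo w) (ao w) (t w) r.

Definition assign_ae (e : st -> R) : prog := fun w v => v = set_ae w (e w).
Definition assign_ao (e : st -> R) : prog := fun w v => v = set_ao w (e w).
Definition assign_tc (e : st -> R) : prog := fun w v => v = set_tc w (e w).
Definition rand_ae : prog := fun w v => exists r, v = set_ae w r.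
Definition rand_ao : prog := fun w v => exists r, v = set_ao w r.

Section Model.
Variable c : consts.

Definition Ctx (w : st) : Prop :=
  T c > 0 /\ L c > 0 /\ V c > 0 /\
  Bmax c <= Bmin c /\ Bmin c < 0 /\ 0 < Amin c /\ Amin c <= Amax c /\
  Bmax c <= ae w <= Amax c /\ Bmax c <= ao w <= Amax c /\
  0 <= ve w <= V c /\ 0 <= vo w <= V c.

Definition De (a : R) (w : st) : R := xe w - (ve w)^2 / (2 * a).
Definition Do (w : st) : R := xo w - (vo w)^2 / (2 * Bmax c).
Definition hve (w : st) : R := ve w - V c.
Definition hvo (w : st) : R := vo w - V c.
Definition hxe (w : st) : R := xe w - V c * t w.
Definition hxo (w : st) : R := xo w - V c * t w.
Definition hDe (a : R) (w : st) : R := hxe w - (hve w)^2 / (2 * a).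
Definition hDo (w : st) : R := hxo w - (hvo w)^2 / (2 * Amax c).

Definition safeBack (w : st) : Prop :=
  xe w + L c <= xo w /\
  ( (ae w <= Bmin c /\ De (Bmin c) w + L c < Do w)
  \/ (Bmin c <= ae w /\ ve w + ae w * T c < 0 /\ De (ae w) w + L c < Do w)
  \/ (Bmin c <= ae w /\ ve w + ae w * T c >= 0 /\
      De (Bmin c) w + (- ae w / Bmin c + 1) * (ae w / 2 * (T c)^2 + T c * ve w)
        + L c < Do w)).

Definition safeFront (w : st) : Prop :=
  xo w + L c <= xe w /\
  ( (Amin c <= ae w /\ hDo w + L c < hDe (Amin c) w)
  \/ (ae w <= Amin c /\ hve w + ae w * T c > 0 /\ hDo w + L c < hDe (ae w) w)
  \/ (ae w <= Amin c /\ hve w + ae w * T c <= 0 /\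
      hDo w + L c < hDe (Amin c) w
        + (- ae w / Amin c + 1) * (ae w / 2 * (T c)^2 + hve w * T c))).

Definition ctrl_o : prog :=
  pseq rand_ao (test (fun w => Bmax c <= ao w <= Amax c)).

Definition ctrl_T : prog :=
  pseq rand_ae
  (pseq (test (fun w => Bmax c <= ae w <= Amax c))
  (pseq (assign_tc (fun w => t w))
        (pif (fun w => ~ (safeBack w \/ safeFront w))
             (pifelse (fun w => xe w <= xo w)
                (pseq rand_ae (test (fun w => Bmax c <= ae w <= Bmin c)))
                (pseq rand_ae (test (fun w => Amin c <= ae w <= Amax c))))))).

Definition accCor : prog :=
  pseq (pif (fun w => (vo w = 0 /\ ao w < 0) \/ (vo w = V c /\ ao w > 0))
            (assign_ao (fun _ => 0)))
       (pif (fun w => (ve w = 0 /\ ae w < 0) \/ (ve w = V c /\ ae w > 0))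
            (assign_ae (fun _ => 0))).

Definition plant : prog := fun w v =>
  exists (r : R) (phi : R -> st),
    0 <= r /\ phi 0 = w /\ phi r = v /\
    (forall s, 0 <= s <= r ->
       derivable_pt_lim (fun u => xe (phi u)) s (ve (phi s)) /\
       derivable_pt_lim (fun u => ve (phi u)) s (ae (phi s)) /\
       derivable_pt_lim (fun u => xo (phi u)) s (vo (phi s)) /\
       derivable_pt_lim (fun u => vo (phi u)) s (ao (phi s)) /\
       derivable_pt_lim (fun u => t (phi u)) s 1 /\
       ae (phi s) = ae w /\ ao (phi s) = ao w /\ tc (phi s) = tc w /\
       t (phi s) <= tc (phi s) + T c /\
       0 <= ve (phi s) <= V c /\ 0 <= vo (phi s) <= V c).

Definition alpha_model : prog :=
  pstar (pseq ctrl_o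
        (pseq (pchoice ctrl_T (test (fun w => t w < tc w + T c)))
        (pseq accCor plant))).

End Model.

(* Both formulas are instances of one safety argument for a follower driving behind a leader
   on a line. The invariant says that the gap is at least [L], and
   that if the follower keeps its current acceleration until the end of the control cycle and
   then brakes at [Bm], it comes to rest [L] before the point where the leader comes to rest
   when braking at its hardest rate [BM <= Bm].
   Along the continuous evolution the leader's rest point can only advance and the follower's
   planned rest point cannot, so the second half persists; and whenever the gap has shrunk to
   [L], it forces the follower to be strictly slower than the leader, so the gap never drops
   below [L]. At each cycle the controller either passes a check that is literally the
   invariant for the new acceleration, or brakes at least at [Bm], which the old invariant
   makes safe.
   The front case is the back case in the frame moving at the speed limit [V] with reversed
   orientation ([x := V t - x], [v := V - v], [a := - a]): the car ahead becomes the follower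
   and accelerating becomes braking, with [Bm = - Amin] and [BM = - Amax]. *)

From Stdlib Require Import Reals Lra Classical.
Open Scope R_scope.

Definition stop_pos (B x v : R) : R := x - v ^ 2 / (2 * B).

(* Keeping [a] for time [r] and then braking at [Bm] ends at least [L] before [D]: the first
   case brakes already, the second comes to rest within time [r], and by [stop_pos_flow] the
   third bounds the rest point reached after the acceleration phase. *)
Definition safe_follow (Bm L r x v a D : R) : Prop :=
  (a <= Bm /\ stop_pos Bm x v + L < D) \/
  (Bm <= a /\ v + a * r < 0 /\ stop_pos a x v + L < D) \/
  (Bm <= a /\ v + a * r >= 0 /\
     stop_pos Bm x v + (- a / Bm + 1) * (a / 2 * r ^ 2 + r * v) + L < D).

Definition follow_inv (Bm BM L r x v a y u : R) : Prop :=
  x + L <= y /\ 0 <= r /\ safe_follow Bm L r x v a (stop_pos BM y u).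

Lemma stop_pos_flow (B x v a s : R) : B <> 0 ->
  stop_pos B (x + v * s + a * s ^ 2 / 2) (v + a * s) =
  stop_pos B x v + (- a / B + 1) * (a / 2 * s ^ 2 + s * v).
Proof. intros HB. unfold stop_pos. field. exact HB. Qed.

Lemma displacement_nonneg (v a s : R) :
  0 <= s -> 0 <= v -> 0 <= v + a * s -> 0 <= a / 2 * s ^ 2 + s * v.
Proof. intros. nra. Qed.

Lemma brake_factor_nonneg (B a : R) : B < 0 -> B <= a -> 0 <= - a / B + 1.
Proof.
  intros HB Ha. replace (- a / B + 1) with ((a - B) * / - B) by (field; lra).
  apply Rmult_le_pos; [lra | apply Rlt_le, Rinv_0_lt_compat; lra].
Qed.

Lemma brake_factor_nonpos (B a : R) : B < 0 -> a <= B -> - a / B + 1 <= 0.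
Proof.
  intros HB Ha. replace (- a / B + 1) with (- ((B - a) * / - B)) by (field; lra).
  enough (0 <= (B - a) * / - B) by lra.
  apply Rmult_le_pos; [lra | apply Rlt_le, Rinv_0_lt_compat; lra].
Qed.

Lemma stop_pos_flow_ge (B x v a s : R) : B < 0 -> B <= a ->
  0 <= s -> 0 <= v -> 0 <= v + a * s ->
  stop_pos B x v <= stop_pos B (x + v * s + a * s ^ 2 / 2) (v + a * s).
Proof.
  intros HB Ha Hs Hv Hvs. rewrite stop_pos_flow by lra.
  assert (H := Rmult_le_pos _ _ (brake_factor_nonneg B a HB Ha)
                 (displacement_nonneg v a s Hs Hv Hvs)).
  lra.
Qed.

Lemma stop_pos_flow_le (B x v a s : R) : B < 0 -> a <= B ->
  0 <= s -> 0 <= v -> 0 <= v + a * s ->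
  stop_pos B (x + v * s + a * s ^ 2 / 2) (v + a * s) <= stop_pos B x v.
Proof.
  intros HB Ha Hs Hv Hvs. rewrite stop_pos_flow by lra.
  assert (H := Rmult_le_compat_r _ _ _ (displacement_nonneg v a s Hs Hv Hvs)
                 (brake_factor_nonpos B a HB Ha)).
  lra.
Qed.

Lemma brake_dist_le (B' B u v : R) : B' <= B -> B < 0 -> 0 <= u <= v ->
  v ^ 2 / (2 * B) <= u ^ 2 / (2 * B').
Proof.
  intros HBB HB Huv.
  replace (v ^ 2 / (2 * B)) with (- (v ^ 2 * / (- 2 * B))) by (field; lra).
  replace (u ^ 2 / (2 * B')) with (- (u ^ 2 * / (- 2 * B'))) by (field; lra).
  apply Ropp_le_contravar, Rmult_le_compat.
  - nra.
  - apply Rlt_le, Rinv_0_lt_compat. lra.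
  - nra.
  - apply Rinv_le_contravar; lra.
Qed.

Lemma quadratic_stays_nonneg (g0 b c S : R) : 0 <= g0 -> 0 <= S ->
  (forall s, 0 <= s <= S -> g0 + b * s + c * s ^ 2 / 2 <= 0 -> 0 < b + c * s) ->
  0 <= g0 + b * S + c * S ^ 2 / 2.
Proof.
  intros Hg0 HS Hbarrier.
  destruct (Rle_or_lt 0 (g0 + b * S + c * S ^ 2 / 2)) as [Hpos | Hneg]; [exact Hpos | exfalso].
  assert (HdS := Hbarrier S (conj HS (Rle_refl S)) (Rlt_le _ _ Hneg)).
  destruct (Rle_or_lt c 0) as [Hc | Hc]; [nra |].
  destruct (Rle_or_lt 0 b) as [Hb | Hb]; [nra |].
  (* Now g is convex and decreasing at 0; at its vertex m in [0, S] the derivative vanishes,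
     so the barrier forces g(m) > 0, and g(S) >= g(m). *)
  set (m := - b / c).
  assert (Hm : b + c * m = 0) by (unfold m; field; lra).
  assert (Hm0 : 0 <= m) by nra.
  assert (HmS : m <= S) by nra.
  assert (Hvertex : g0 + b * S + c * S ^ 2 / 2 =
                    g0 + b * m + c * m ^ 2 / 2 + c * (S - m) ^ 2 / 2).
  { replace b with (- c * m) by lra. field. }
  assert (Hbm := Hbarrier m (conj Hm0 HmS)).
  nra.
Qed.

Section Following.

Variables Bm BM L : R.
Hypothesis Bm_neg : Bm < 0.
Hypothesis BM_le_Bm : BM <= Bm.

Lemma safe_follow_stop (r x v a D : R) : 0 <= v -> 0 <= r ->
  safe_follow Bm L r x v a D -> stop_pos Bm x v + L < D.
Proof.
  intros Hv Hr [[_ H] | [(Ha & Hstop & H) | (Ha & Hgo & H)]]; [exact H | |].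
  - assert (Ha0 : a < 0) by nra.
    assert (Hd := brake_dist_le Bm a v v Ha Ha0 (conj Hv (Rle_refl v))).
    unfold stop_pos in *. lra.
  - assert (Hd := Rmult_le_pos _ _ (brake_factor_nonneg Bm a Bm_neg Ha)
                    (displacement_nonneg v a r Hr Hv ltac:(lra))).
    lra.
Qed.

Lemma safe_follow_now (x v a D : R) : 0 <= v ->
  stop_pos Bm x v + L < D -> safe_follow Bm L 0 x v a D.
Proof.
  intros Hv H. destruct (Rle_or_lt a Bm) as [Ha | Ha]; [left; auto |].
  right; right. repeat split; [lra | lra |].
  replace (a / 2 * 0 ^ 2 + 0 * v) with 0 by ring. lra.
Qed.

Lemma safe_follow_le (r x v a D D' : R) : D <= D' ->
  safe_follow Bm L r x v a D -> safe_follow Bm L r x v a D'.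
Proof. unfold safe_follow. intros. lra. Qed.

Lemma safe_follow_coast (r x v a D : R) : 0 <= v -> 0 <= r -> v = 0 \/ 0 < a ->
  safe_follow Bm L r x v a D -> safe_follow Bm L r x v 0 D.
Proof.
  intros Hv Hr Hcoast HS.
  assert (Hstop := safe_follow_stop r x v a D Hv Hr HS).
  right; right. split; [lra | split; [lra |]].
  replace (- 0 / Bm + 1) with 1 by (field; lra).
  destruct Hcoast as [-> | Ha]; [replace (0 / 2 * r ^ 2 + r * 0) with 0 by field; lra |].
  destruct HS as [[? _] | [(_ & ? & _) | (_ & _ & H)]]; [lra | nra |].
  assert (Hf : 1 <= - a / Bm + 1).
  { replace (- a / Bm + 1) with (a * / - Bm + 1) by (field; lra).
    assert (0 <= a * / - Bm) by (apply Rmult_le_pos; [lra | apply Rlt_le, Rinv_0_lt_compat; lra]).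
    lra. }
  replace (0 / 2 * r ^ 2 + r * v) with (r * v) by field.
  assert (Hdisp : 0 <= r * v <= a / 2 * r ^ 2 + r * v) by nra.
  assert (r * v <= (- a / Bm + 1) * (a / 2 * r ^ 2 + r * v)) by nra.
  lra.
Qed.

Lemma safe_follow_flow (r x v a D s : R) : 0 <= s -> 0 <= v -> 0 <= v + a * s ->
  safe_follow Bm L r x v a D ->
  safe_follow Bm L (r - s) (x + v * s + a * s ^ 2 / 2) (v + a * s) a D.
Proof.
  intros Hs Hv Hvs [[Ha H] | [(Ha & Hstop & H) | (Ha & Hgo & H)]].
  - left. split; [exact Ha |].
    assert (Hle := stop_pos_flow_le Bm x v a s Bm_neg Ha Hs Hv Hvs). lra.
  - assert (Ha0 : a <> 0) by (intros ->; lra).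
    right; left. split; [exact Ha | split].
    + replace (v + a * s + a * (r - s)) with (v + a * r) by ring. exact Hstop.
    + rewrite stop_pos_flow by exact Ha0.
      replace (- a / a + 1) with 0 by (field; exact Ha0). lra.
  - right; right. split; [exact Ha | split].
    + replace (v + a * s + a * (r - s)) with (v + a * r) by ring. exact Hgo.
    + rewrite stop_pos_flow by lra.
      replace (stop_pos Bm x v + (- a / Bm + 1) * (a / 2 * s ^ 2 + s * v) +
               (- a / Bm + 1) * (a / 2 * (r - s) ^ 2 + (r - s) * (v + a * s)))
        with (stop_pos Bm x v + (- a / Bm + 1) * (a / 2 * r ^ 2 + r * v)) by (field; lra).
      exact H.
Qed.

Lemma slower_when_close (x v y u : R) : 0 <= v -> 0 <= u ->
  stop_pos Bm x v + L < stop_pos BM y u -> y <= x + L -> v < u.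
Proof.
  intros Hv Hu Hstop Hclose.
  destruct (Rlt_or_le v u) as [Hlt | Hle]; [exact Hlt | exfalso].
  assert (Hd := brake_dist_le BM Bm u v BM_le_Bm Bm_neg (conj Hu Hle)).
  unfold stop_pos in Hstop. lra.
Qed.

Lemma follow_inv_init (x v a y u : R) : 0 <= v -> x + L <= y ->
  stop_pos Bm x v + L < stop_pos BM y u -> follow_inv Bm BM L 0 x v a y u.
Proof.
  intros Hv Hgap Hstop. repeat split; [exact Hgap | lra |].
  exact (safe_follow_now x v a _ Hv Hstop).
Qed.

Lemma follow_inv_brake (r r' x v a a' y u : R) : 0 <= v -> a' <= Bm -> 0 <= r' ->
  follow_inv Bm BM L r x v a y u -> follow_inv Bm BM L r' x v a' y u.
Proof.
  intros Hv Ha' Hr' (Hgap & Hr & HS). repeat split; [exact Hgap | exact Hr' |].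
  left. split; [exact Ha' | exact (safe_follow_stop r x v a _ Hv Hr HS)].
Qed.

Lemma follow_inv_coast (r x v a y u : R) : 0 <= v -> v = 0 \/ 0 < a ->
  follow_inv Bm BM L r x v a y u -> follow_inv Bm BM L r x v 0 y u.
Proof.
  intros Hv Hcoast (Hgap & Hr & HS). repeat split; [exact Hgap | exact Hr |].
  exact (safe_follow_coast r x v a _ Hv Hr Hcoast HS).
Qed.

Lemma follow_inv_flow (r x v a y u b S : R) : BM <= b -> 0 <= S <= r ->
  (forall s, 0 <= s <= S -> 0 <= v + a * s /\ 0 <= u + b * s) ->
  follow_inv Bm BM L r x v a y u ->
  follow_inv Bm BM L (r - S) (x + v * S + a * S ^ 2 / 2) (v + a * S) a
    (y + u * S + b * S ^ 2 / 2) (u + b * S).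
Proof.
  intros Hb HS Hvel (Hgap & Hr & HSafe).
  destruct (Hvel 0 ltac:(lra)) as [Hv Hu].
  rewrite Rmult_0_r, Rplus_0_r in Hv, Hu.
  assert (Hsafe_at : forall s, 0 <= s <= S ->
    safe_follow Bm L (r - s) (x + v * s + a * s ^ 2 / 2) (v + a * s) a
      (stop_pos BM (y + u * s + b * s ^ 2 / 2) (u + b * s))).
  { intros s Hs. destruct (Hvel s Hs) as [Hvs Hus].
    apply (safe_follow_le _ _ _ _ (stop_pos BM y u)).
    - apply stop_pos_flow_ge; lra.
    - apply safe_follow_flow; lra || exact HSafe. }
  repeat split; [| lra | apply Hsafe_at; lra].
  (* The gap g(s) = y(s) - x(s) - L is quadratic and increases wherever g(s) <= 0. *)
  enough (0 <= (y - x - L) + (u - v) * S + (b - a) * S ^ 2 / 2) by nra.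
  apply quadratic_stays_nonneg; [lra | lra |].
  intros s Hs Hclose. destruct (Hvel s Hs) as [Hvs Hus].
  assert (Hstop := safe_follow_stop (r - s) _ _ _ _ Hvs ltac:(lra) (Hsafe_at s Hs)).
  assert (Hslower := slower_when_close _ _ _ _ Hvs Hus Hstop ltac:(nra)).
  lra.
Qed.

End Following.

Lemma derivable_pt_lim_affine (x0 v0 s : R) :
  derivable_pt_lim (fun u => x0 + v0 * u) s v0.
Proof.
  pose proof (derivable_pt_lim_plus (fun _ => x0) (fun u => v0 * u) s _ _
    (derivable_pt_lim_const x0 s)
    (derivable_pt_lim_scal (fun u => u) v0 s _ (derivable_pt_lim_id s))) as H.
  rewrite Rplus_0_l, Rmult_1_r in H. exact H.
Qed.

Lemma derivable_pt_lim_kinematic (x0 v0 a s : R) :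
  derivable_pt_lim (fun u => x0 + v0 * u + a * u ^ 2 / 2) s (v0 + a * s).
Proof.
  replace (v0 + a * s) with (v0 + a * (INR 2 * s ^ pred 2) * / 2) by (simpl; field).
  apply (derivable_pt_lim_plus (fun u => x0 + v0 * u) (fun u => a * u ^ 2 / 2)).
  - apply derivable_pt_lim_affine.
  - apply (derivable_pt_lim_scal_right (fun u => a * u ^ 2)).
    apply (derivable_pt_lim_scal (fun u => u ^ 2)), derivable_pt_lim_pow.
Qed.

Lemma derivable_pt_lim_eq_on (f g df : R -> R) (d : R) :
  (forall s, 0 <= s <= d -> derivable_pt_lim f s (df s) /\ derivable_pt_lim g s (df s)) ->
  f 0 = g 0 -> forall s, 0 <= s <= d -> f s = g s.
Proof.
  intros Hd H0 s Hs.
  destruct (Req_dec s 0) as [-> | Hs0]; [exact H0 |].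
  destruct (MVT_cor2 (fun u => f u - g u) (fun u => df u - df u) 0 s)
    as (m & Hm & _); [lra | |].
  - intros u Hu. destruct (Hd u ltac:(lra)) as [Hf Hg].
    exact (derivable_pt_lim_minus f g u _ _ Hf Hg).
  - rewrite Rminus_diag, Rmult_0_l in Hm. lra.
Qed.

Lemma uniform_acceleration (p vel : R -> R) (x0 v0 a d : R) :
  p 0 = x0 -> vel 0 = v0 ->
  (forall s, 0 <= s <= d -> derivable_pt_lim p s (vel s) /\ derivable_pt_lim vel s a) ->
  forall s, 0 <= s <= d -> vel s = v0 + a * s /\ p s = x0 + v0 * s + a * s ^ 2 / 2.
Proof.
  intros Hp0 Hv0 Hd.
  assert (Hvel : forall s, 0 <= s <= d -> vel s = v0 + a * s).
  { apply (derivable_pt_lim_eq_on vel (fun u => v0 + a * u) (fun _ => a)).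
    - intros s Hs. split; [apply Hd, Hs | apply derivable_pt_lim_affine].
    - rewrite Hv0. ring. }
  intros s Hs. split; [now apply Hvel |].
  apply (derivable_pt_lim_eq_on p (fun u => x0 + v0 * u + a * u ^ 2 / 2) vel d); [| | exact Hs].
  - intros u Hu. split; [apply Hd, Hu |].
    rewrite (Hvel u Hu). apply derivable_pt_lim_kinematic.
  - rewrite Hp0. cbv beta. field.
Qed.

Lemma plant_inv (c : consts) (w v : st) : plant c w v ->
  exists d, 0 <= d /\ t w + d <= tc w + T c /\
    (forall s, 0 <= s <= d -> 0 <= ve w + ae w * s <= V c /\ 0 <= vo w + ao w * s <= V c) /\
    v = mkSt (xe w + ve w * d + ae w * d ^ 2 / 2) (ve w + ae w * d) (ae w)
             (xo w + vo w * d + ao w * d ^ 2 / 2) (vo w + ao w * d) (ao w)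
             (t w + d) (tc w).
Proof.
  intros (d & phi & Hd & H0 & Hv & Hode).
  assert (Hsol : forall s, 0 <= s <= d ->
    (ve (phi s) = ve w + ae w * s /\ xe (phi s) = xe w + ve w * s + ae w * s ^ 2 / 2) /\
    (vo (phi s) = vo w + ao w * s /\ xo (phi s) = xo w + vo w * s + ao w * s ^ 2 / 2) /\
    t (phi s) = t w + s).
  { intros s Hs. split; [| split].
    - apply (uniform_acceleration (fun u => xe (phi u)) (fun u => ve (phi u))) with d;
        [now rewrite H0 | now rewrite H0 | | exact Hs].
      intros u Hu. destruct (Hode u Hu) as (? & ? & _ & _ & _ & <- & _). auto.
    - apply (uniform_acceleration (fun u => xo (phi u)) (fun u => vo (phi u))) with d;
        [now rewrite H0 | now rewrite H0 | | exact Hs].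
      intros u Hu. destruct (Hode u Hu) as (_ & _ & ? & ? & _ & _ & <- & _). auto.
    - destruct (uniform_acceleration (fun u => t (phi u)) (fun _ => 1) (t w) 1 0 d)
        with s as [_ Ht]; [now rewrite H0 | reflexivity | | exact Hs |].
      + intros u Hu. split; [apply Hode, Hu | apply derivable_pt_lim_const].
      + rewrite Ht. field. }
  exists d. split; [exact Hd | split; [| split]].
  - destruct (Hode d ltac:(lra)) as (_ & _ & _ & _ & _ & _ & _ & Htc & Hdom & _).
    destruct (Hsol d ltac:(lra)) as (_ & _ & Ht).
    lra.
  - intros s Hs. destruct (Hode s Hs) as (_ & _ & _ & _ & _ & _ & _ & _ & _ & Hve & Hvo).
    destruct (Hsol s Hs) as ([<- _] & [<- _] & _). auto.
  - destruct (Hode d ltac:(lra)) as (_ & _ & _ & _ & _ & Hae & Hao & Htc & _).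
    destruct (Hsol d ltac:(lra)) as ([Hve Hxe] & [Hvo Hxo] & Ht).
    rewrite Hv in *. destruct v. simpl in *. subst. reflexivity.
Qed.

Lemma ctrl_o_inv (c : consts) (w v : st) :
  ctrl_o c w v -> exists b, v = set_ao w b /\ Bmax c <= b <= Amax c.
Proof. intros (u & [b ->] & Hb & ->). eauto. Qed.

Lemma ctrl_T_inv (c : consts) (w v : st) : ctrl_T c w v ->
  exists a1, Bmax c <= a1 <= Amax c /\
    ((v = set_tc (set_ae w a1) (t w) /\
      (safeBack c (set_tc (set_ae w a1) (t w)) \/ safeFront c (set_tc (set_ae w a1) (t w)))) \/
     exists a2, v = set_ae (set_tc (set_ae w a1) (t w)) a2 /\
       ((xe w <= xo w /\ Bmax c <= a2 <= Bmin c) \/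
        (~ xe w <= xo w /\ Amin c <= a2 <= Amax c))).
Proof.
  intros (u1 & [a1 ->] & u2 & [Ha1 ->] & u3 & -> & Hif).
  exists a1. split; [exact Ha1 |].
  destruct Hif as [(u4 & [_ ->] & Hbranch) | [Hsafe ->]].
  - right. destruct Hbranch as [(u5 & [Hle ->] & u6 & [a2 ->] & Ha2 & ->)
                              | (u5 & [Hgt ->] & u6 & [a2 ->] & Ha2 & ->)];
      exists a2; auto.
  - left. split; [reflexivity | exact (NNPP _ Hsafe)].
Qed.

Lemma accCor_inv (c : consts) (w v : st) : accCor c w v ->
  exists u, (u = w \/ u = set_ao w 0) /\
    (v = u \/ (v = set_ae u 0 /\ ((ve u = 0 /\ ae u < 0) \/ (ve u = V c /\ ae u > 0)))).
Proof.
  intros (u & Ho & He). exists u. split.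
  - destruct Ho as [(u' & [_ ->] & ->) | [_ ->]]; auto.
  - destruct He as [(u' & [Hc ->] & ->) | [_ ->]]; auto.
Qed.

Lemma Ctx_set_ao (c : consts) (w : st) (b : R) :
  Ctx c w -> Bmax c <= b <= Amax c -> Ctx c (set_ao w b).
Proof. unfold Ctx; simpl; tauto. Qed.

Lemma Ctx_set_ae (c : consts) (w : st) (a : R) :
  Ctx c w -> Bmax c <= a <= Amax c -> Ctx c (set_ae w a).
Proof. unfold Ctx; simpl; tauto. Qed.

Lemma Ctx_ctrl_T (c : consts) (w v : st) : Ctx c w -> ctrl_T c w v -> Ctx c v.
Proof.
  intros HC HT.
  destruct (ctrl_T_inv c w v HT) as (a1 & Ha1 & [[-> _] | (a2 & -> & Ha2)]).
  - exact (Ctx_set_ae c w a1 HC Ha1).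
  - apply (Ctx_set_ae c (set_tc (set_ae w a1) (t w))); [exact (Ctx_set_ae c w a1 HC Ha1) |].
    destruct HC as (_ & _ & _ & ? & ? & ? & ? & _). destruct Ha2 as [[_ ?] | [_ ?]]; lra.
Qed.

Lemma Ctx_plant (c : consts) (w v : st) : Ctx c w -> plant c w v -> Ctx c v.
Proof.
  intros HC Hp. destruct (plant_inv c w v Hp) as (d & Hd & _ & Hvel & ->).
  destruct (Hvel d ltac:(lra)).
  unfold Ctx in *; simpl. tauto.
Qed.

Lemma pstar_invariant (a : prog) (J : st -> Prop) :
  (forall w v, J w -> a w v -> J v) -> forall w, J w -> box (pstar a) J w.
Proof. intros Hstep w Hw v Hrun. induction Hrun; eauto. Qed.

Lemma alpha_model_invariant (c : consts) (J : st -> Prop) :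
  (forall w b, J w -> J (set_ao w b)) ->
  (forall w v, Ctx c w -> J w -> ctrl_T c w v -> J v) ->
  (forall w, Ctx c w -> J w -> (ve w = 0 /\ ae w < 0) \/ (ve w = V c /\ ae w > 0) ->
     J (set_ae w 0)) ->
  (forall w v, Ctx c w -> J w -> plant c w v -> J v) ->
  forall w, Ctx c w -> J w -> box (alpha_model c) (fun v => Ctx c v /\ J v) w.
Proof.
  intros Hao Hctrl Hcoast Hplant w HC HJ.
  apply (pstar_invariant _ (fun v => Ctx c v /\ J v)); [| split; assumption].
  clear w HC HJ. intros w v [HC HJ] (u1 & Ho & u2 & HT & u3 & Hacc & Hp).
  assert (Hzero : Bmax c <= 0 <= Amax c).
  { destruct HC as (_ & _ & _ & ? & ? & ? & ? & _). lra. }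
  destruct (ctrl_o_inv c w u1 Ho) as (b & -> & Hb).
  assert (HC1 := Ctx_set_ao c w b HC Hb). assert (HJ1 := Hao w b HJ).
  assert (H2 : Ctx c u2 /\ J u2).
  { destruct HT as [HT | [_ ->]]; [| split; assumption].
    split; [exact (Ctx_ctrl_T c _ u2 HC1 HT) | exact (Hctrl _ u2 HC1 HJ1 HT)]. }
  destruct H2 as [HC2 HJ2].
  destruct (accCor_inv c u2 u3 Hacc) as (u & Hu & Hu3).
  assert (H : Ctx c u /\ J u).
  { destruct Hu as [-> | ->]; [split; assumption |].
    split; [exact (Ctx_set_ao c u2 0 HC2 Hzero) | exact (Hao u2 0 HJ2)]. }
  destruct H as [HCu HJu].
  assert (H3 : Ctx c u3 /\ J u3).
  { destruct Hu3 as [-> | [-> Hcond]]; [split; assumption |].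
    split; [exact (Ctx_set_ae c u 0 HCu Hzero) | exact (Hcoast u HCu HJu Hcond)]. }
  destruct H3 as [HC3 HJ3].
  split; [exact (Ctx_plant c u3 v HC3 Hp) | exact (Hplant u3 v HC3 HJ3 Hp)].
Qed.

Definition back_inv (c : consts) (w : st) : Prop :=
  follow_inv (Bmin c) (Bmax c) (L c) (tc w + T c - t w) (xe w) (ve w) (ae w) (xo w) (vo w).

Lemma back_inv_init (c : consts) (w : st) : Ctx c w ->
  xe w + L c <= xo w -> De (Bmin c) w + L c < Do c w -> tc w = t w - T c -> back_inv c w.
Proof.
  intros HC Hgap Hstop Htc. destruct HC as (_ & _ & _ & _ & _ & _ & _ & _ & _ & [Hve _] & _).
  unfold back_inv. replace (tc w + T c - t w) with 0 by lra.
  exact (follow_inv_init _ _ _ _ _ _ _ _ Hve Hgap Hstop).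
Qed.

Lemma back_inv_ctrl_T (c : consts) (w v : st) :
  Ctx c w -> back_inv c w -> ctrl_T c w v -> back_inv c v.
Proof.
  intros HC HJ HT. assert (Hgap := proj1 HJ).
  destruct HC as (HT0 & HL & _ & _ & HBm & _ & _ & _ & _ & [Hve _] & _).
  destruct (ctrl_T_inv c w v HT)
    as (a1 & _ & [[-> [[_ Hsafe] | [Hfront _]]] | (a2 & -> & [[_ Ha2] | [Hfar _]])]);
    unfold back_inv; simpl in *; [| lra | | lra].
  - repeat split; [exact Hgap | lra |].
    replace (t w + T c - t w) with (T c) by ring. exact Hsafe.
  - apply follow_inv_brake with (r := tc w + T c - t w) (a := ae w);
      [exact HBm | exact Hve | lra | lra | exact HJ].
Qed.

Lemma back_inv_coast (c : consts) (w : st) : Ctx c w -> back_inv c w ->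
  (ve w = 0 /\ ae w < 0) \/ (ve w = V c /\ ae w > 0) -> back_inv c (set_ae w 0).
Proof.
  intros HC HJ Hcond. destruct HC as (_ & _ & _ & _ & HBm & _ & _ & _ & _ & [Hve _] & _).
  apply follow_inv_coast with (a := ae w); [exact HBm | exact Hve | | exact HJ].
  destruct Hcond as [[Hv0 _] | [_ Ha]]; [left | right]; assumption.
Qed.

Lemma back_inv_plant (c : consts) (w v : st) :
  Ctx c w -> back_inv c w -> plant c w v -> back_inv c v.
Proof.
  intros HC HJ Hp. destruct HC as (_ & _ & _ & HBB & HBm & _ & _ & _ & [Hao _] & _).
  destruct (plant_inv c w v Hp) as (d & Hd & Hdt & Hvel & ->).
  unfold back_inv; simpl.
  replace (tc w + T c - (t w + d)) with (tc w + T c - t w - d) by ring.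
  apply follow_inv_flow; [exact HBm | exact HBB | exact Hao | lra | | exact HJ].
  intros s Hs. destruct (Hvel s Hs). lra.
Qed.

Definition front_inv (c : consts) (w : st) : Prop :=
  follow_inv (- Amin c) (- Amax c) (L c) (tc w + T c - t w)
    (V c * t w - xe w) (V c - ve w) (- ae w) (V c * t w - xo w) (V c - vo w).

Lemma hDe_mirror (c : consts) (a : R) (w : st) : a <> 0 ->
  hDe c a w = - stop_pos (- a) (V c * t w - xe w) (V c - ve w).
Proof. intros Ha. unfold hDe, hxe, hve, stop_pos. field. exact Ha. Qed.

Lemma hDo_mirror (c : consts) (w : st) : Amax c <> 0 ->
  hDo c w = - stop_pos (- Amax c) (V c * t w - xo w) (V c - vo w).
Proof. intros HA. unfold hDo, hxo, hvo, stop_pos. field. exact HA. Qed.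

Lemma mirror_flow_pos (V t0 d x v a : R) :
  V * (t0 + d) - (x + v * d + a * d ^ 2 / 2) = (V * t0 - x) + (V - v) * d + (- a) * d ^ 2 / 2.
Proof. field. Qed.

Lemma mirror_flow_vel (V v a d : R) : V - (v + a * d) = (V - v) + (- a) * d.
Proof. ring. Qed.

Lemma safeFront_safe_follow (c : consts) (w : st) : Ctx c w -> safeFront c w ->
  safe_follow (- Amin c) (L c) (T c) (V c * t w - xe w) (V c - ve w) (- ae w)
    (stop_pos (- Amax c) (V c * t w - xo w) (V c - vo w)).
Proof.
  intros HC [_ HS]. destruct HC as (HT & _ & _ & _ & _ & HA & HAA & _ & _ & [_ Hve] & _).
  rewrite hDo_mirror in HS by lra. unfold hve in HS.
  destruct HS as [[Ha H] | [(Ha & Hgo & H) | (Ha & Hstop & H)]].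
  - left. rewrite hDe_mirror in H by lra. split; lra.
  - assert (Ha0 : ae w <> 0) by (intros E; rewrite E in Hgo; lra).
    right; left. rewrite hDe_mirror in H by exact Ha0. repeat split; lra.
  - right; right. rewrite hDe_mirror in H by lra. repeat split; [lra | lra |].
    replace ((- - ae w / - Amin c + 1) * (- ae w / 2 * T c ^ 2 + T c * (V c - ve w)))
      with (- ((- ae w / Amin c + 1) * (ae w / 2 * T c ^ 2 + (ve w - V c) * T c)))
      by (field; lra).
    lra.
Qed.

Lemma front_inv_init (c : consts) (w : st) : Ctx c w ->
  xo w + L c <= xe w -> hDo c w + L c < hDe c (Amin c) w -> tc w = t w - T c -> front_inv c w.
Proof.
  intros HC Hgap Hstop Htc.
  destruct HC as (_ & _ & _ & _ & _ & HA & HAA & _ & _ & [_ Hve] & _).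
  rewrite hDo_mirror, hDe_mirror in Hstop by lra.
  unfold front_inv. replace (tc w + T c - t w) with 0 by lra.
  apply follow_inv_init; lra.
Qed.

Lemma front_inv_ctrl_T (c : consts) (w v : st) :
  Ctx c w -> front_inv c w -> ctrl_T c w v -> front_inv c v.
Proof.
  intros HC HJ HT. assert (Hgap := proj1 HJ). assert (HL := proj1 (proj2 HC)).
  destruct (ctrl_T_inv c w v HT)
    as (a1 & Ha1 & [[-> [[Hback _] | Hsafe]] | (a2 & -> & [[Hnear _] | [_ Ha2]])]).
  - simpl in Hback. lra.
  - assert (HS := safeFront_safe_follow c _ (Ctx_set_ae c w a1 HC Ha1) Hsafe).
    destruct Hsafe as [Hgap' _]. destruct HC as (HT0 & _).
    unfold front_inv; simpl in *. repeat split; [lra | lra |].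
    replace (t w + T c - t w) with (T c) by ring. exact HS.
  - lra.
  - destruct HC as (HT0 & _ & _ & _ & _ & HA & _ & _ & _ & [_ Hve] & _).
    unfold front_inv in *; simpl.
    apply follow_inv_brake with (r := tc w + T c - t w) (a := - ae w);
      [lra | lra | lra | lra | exact HJ].
Qed.

Lemma front_inv_coast (c : consts) (w : st) : Ctx c w -> front_inv c w ->
  (ve w = 0 /\ ae w < 0) \/ (ve w = V c /\ ae w > 0) -> front_inv c (set_ae w 0).
Proof.
  intros HC HJ Hcond. destruct HC as (_ & _ & _ & _ & _ & HA & _ & _ & _ & [_ Hve] & _).
  unfold front_inv in *; simpl. rewrite Ropp_0.
  apply follow_inv_coast with (a := - ae w); [lra | lra | | exact HJ].
  destruct Hcond as [[_ Ha] | [Hv _]]; [right | left]; lra.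
Qed.

Lemma front_inv_plant (c : consts) (w v : st) :
  Ctx c w -> front_inv c w -> plant c w v -> front_inv c v.
Proof.
  intros HC HJ Hp. destruct HC as (_ & _ & _ & _ & _ & HA & HAA & _ & [_ Hao] & _).
  destruct (plant_inv c w v Hp) as (d & Hd & Hdt & Hvel & ->).
  unfold front_inv in *; simpl.
  replace (tc w + T c - (t w + d)) with (tc w + T c - t w - d) by ring.
  rewrite !mirror_flow_pos, !mirror_flow_vel.
  apply follow_inv_flow; [lra | lra | lra | lra | | exact HJ].
  intros s Hs. destruct (Hvel s Hs). lra.
Qed.

Theorem theorem1 :
  (forall (c : consts) (w : st),
     Ctx c w /\ xe w + L c <= xo w /\ De (Bmin c) w + L c < Do c w /\
     tc w = t w - T c ->
     box (alpha_model c) (fun v => xe v + L c <= xo v) w) /\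
  (forall (c : consts) (w : st),
     Ctx c w /\ xo w + L c <= xe w /\ hDo c w + L c < hDe c (Amin c) w /\
     tc w = t w - T c ->
     box (alpha_model c) (fun v => xo v + L c <= xe v) w).
Proof.
  split.
  - intros c w (HC & Hgap & Hstop & Htc) v Hrun.
    destruct (alpha_model_invariant c (back_inv c) (fun _ _ HJ => HJ)
                (back_inv_ctrl_T c) (back_inv_coast c) (back_inv_plant c)
                w HC (back_inv_init c w HC Hgap Hstop Htc) v Hrun) as (_ & Hgap' & _).
    exact Hgap'.
  - intros c w (HC & Hgap & Hstop & Htc) v Hrun.
    destruct (alpha_model_invariant c (front_inv c) (fun _ _ HJ => HJ)
                (front_inv_ctrl_T c) (front_inv_coast c) (front_inv_plant c)
                w HC (front_inv_init c w HC Hgap Hstop Htc) v Hrun) as (_ & Hgap' & _).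
    lra.
Qed.
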